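(* Let $g:\{0,1\}^n\to\{0,1\}^{m(n)}$ be computable by polynomial-size circuits with $m(n)>n$. If the ensemble $(g(U_n))_{n\in\mathbb{N}}$ is both $\mathsf{NP}/\mathsf{poly}$-unpredictable and $\mathsf{coNP}/\mathsf{poly}$-unpredictable (i.e. $\cup$-unpredictable), then $g$ is super-bits (in the polynomial-security sense below).
   Context: $U_n$ is the uniform distribution on $\{0,1\}^n$. A nondeterministic circuit $D$ accepts $x$ iff some assignment to its nondeterministic inputs makes it output 1; a co-nondeterministic circuit rejects $x$ iff some assignment makes it output 0. $\mathsf{NP}/\mathsf{poly}$ (resp. $\mathsf{coNP}/\mathsf{poly}$) algorithms are nondeterministic (resp. co-nondeterministic) polynomial-size circuit families. $g$ is called super-bits if for every nondeterministic polynomial-size circuit family $D$, every polynomial $p$ and all sufficiently large $n$, $\Pr[D(U_{m(n)})=1]-\Pr[D(g(U_n))=1]<1/p(n)$. For $\mathcal{K}\in\{\mathsf{NP}/\mathsf{poly},\mathsf{coNP}/\mathsf{poly}\}$, an ensemble $(Z_n)$ is $\mathcal{K}$-predictable if there exist an algorithm $\mathcal{A}$ in $\mathcal{K}$, a polynomial $p$, and infinitely many $n$ each with some $i=i(n)<|Z_n|$ such that $\Pr[\mathcal{A}(Z_n[1\ldots i])=Z_n[i+1]]\ge 1/2+1/p(n)$, and $\mathcal{K}$-unpredictable otherwise. *)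

From mathcomp Require Import all_boot all_order all_algebra.
Set Implicit Arguments. Unset Strict Implicit. Unset Printing Implicit Defensive.
Import Order.TTheory GRing.Theory Num.Theory.

Definition polyN (a : seq nat) (n : nat) : nat :=
  \sum_(k < size a) nth 0 a k * n ^ k.

(* a nonzero polynomial (has some nonzero coefficient); it is > 0 at every n >= 1 *)
Definition nonzero_poly (a : seq nat) : bool := has (fun c => c != 0) a.

(* Wire j, for j < |x|, is input bit j; gate number k defines wire |x| + k
   and may only read previously defined wires (out-of-range reads give false). *)
Inductive gate : Type :=
| GNot of nat
| GAnd of nat & nat
| GOr  of nat & nat.

Definition gate_eval (vs : seq bool) (g : gate) : bool :=
  match g with
  | GNot a => ~~ nth false vs a
  | GAnd a b => nth false vs a && nth false vs b
  | GOr a b => nth false vs a || nth false vs b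
  end.

Record circuit := Circuit { gates : seq gate; outs : seq nat }.

Definition wires (C : circuit) (x : seq bool) : seq bool :=
  foldl (fun vs g => rcons vs (gate_eval vs g)) x (gates C).

Definition ceval (C : circuit) (x : seq bool) : seq bool :=
  map (nth false (wires C x)) (outs C).

Definition ceval1 (C : circuit) (x : seq bool) : bool := nth false (ceval C x) 0.

Definition csize (C : circuit) : nat := size (gates C) + size (outs C).

(* a circuit with nondeterministic (witness) inputs appended after the real input *)
Record ndcircuit := NDCircuit { ncirc : circuit; nwit : nat }.

Definition ndsize (D : ndcircuit) : nat := csize (ncirc D) + nwit D.

Definition nd_eval (D : ndcircuit) (x : seq bool) : bool :=
  [exists w : (nwit D).-tuple bool, ceval1 (ncirc D) (x ++ w)].

Definition cond_eval (D : ndcircuit) (x : seq bool) : bool :=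
  [forall w : (nwit D).-tuple bool, ceval1 (ncirc D) (x ++ w)].

Inductive nd_class := NPpoly | coNPpoly.

Definition class_eval (K : nd_class) (D : ndcircuit) (x : seq bool) : bool :=
  match K with NPpoly => nd_eval D x | coNPpoly => cond_eval D x end.

Definition poly_size_nd (D : nat -> ndcircuit) : Prop :=
  exists a : seq nat, forall n, ndsize (D n) <= polyN a n.

Definition poly_size_circ (C : nat -> circuit) : Prop :=
  exists a : seq nat, forall n, csize (C n) <= polyN a n.

Local Open Scope ring_scope.

Definition prob (n : nat) (P : pred (n.-tuple bool)) : rat :=
  (#|[pred x | P x]|)%:R / (2 ^ n)%:R.

Definition generator (m : nat -> nat) := forall n, n.-tuple bool -> (m n).-tuple bool.

Definition poly_computable (m : nat -> nat) (g : generator m) : Prop :=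
  exists C : nat -> circuit, poly_size_circ C /\
    forall n (x : n.-tuple bool), ceval (C n) x = g n x.

Definition predictable (K : nd_class) (m : nat -> nat) (g : generator m) : Prop :=
  exists A : nat -> ndcircuit, poly_size_nd A /\
  exists p : seq nat, nonzero_poly p /\
  forall N : nat, exists n : nat, (N <= n)%N /\
  exists i : nat, (i < m n)%N /\
    prob [pred x : n.-tuple bool |
            class_eval K (A n) (take i (g n x)) == nth false (g n x) i]
    >= 1 / 2 + 1 / (polyN p n)%:R.

Definition unpredictable K m (g : generator m) : Prop := ~ predictable K g.

Definition super_bits (m : nat -> nat) (g : generator m) : Prop :=
  forall D : nat -> ndcircuit, poly_size_nd D ->
  forall p : seq nat, nonzero_poly p ->
  exists N : nat, forall n : nat, (N <= n)%N ->
    prob [pred y : (m n).-tuple bool | nd_eval (D n) y]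
    - prob [pred x : n.-tuple bool | nd_eval (D n) (g n x)]
    < 1 / (polyN p n)%:R.

From mathcomp Require Import all_boot all_order all_algebra.
From Stdlib Require Import ClassicalEpsilon Classical.
From mathcomp Require Import zify ring lra.
Set Implicit Arguments. Unset Strict Implicit. Unset Printing Implicit Defensive.
Import Order.TTheory GRing.Theory Num.Theory.

(* Suppose a polynomial-size nondeterministic family D tells U_{m(n)} from
   g(U_n) with advantage 1/p(n) for infinitely many n.  Yao's hybrid argument
   (next_bit_predictor) yields, for each such n, a position j < m(n) and an
   advice string r such that "D on (y_1..y_j, r_{j+1}..r_m), negated when
   r_{j+1} = 1" predicts y_{j+1} with advantage 1/(p(n) m(n)).  Hard-wiring
   the advice into D (hardwire) gives a polynomial-size circuit; read
   nondeterministically it computes D, read co-nondeterministically (after a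
   negation gate) it computes not-D.  Infinitely often the advice bit takes
   the same value, which makes g(U_n) NP/poly- or coNP/poly-predictable. *)

Definition wire_step (vs : seq bool) (g : gate) : seq bool :=
  rcons vs (gate_eval vs g).

Lemma wiresE C x : wires C x = foldl wire_step x (gates C).
Proof. by []. Qed.

Lemma size_foldl_wire_step vs gs :
  size (foldl wire_step vs gs) = size vs + size gs.
Proof.
elim: gs vs => [|g gs IH] vs /=; first by rewrite addn0.
by rewrite IH size_rcons addSnnS.
Qed.

(* [shift_gate o g] reads the wires of [g] displaced by [o]; it lets a circuit
   run on top of [o] extra leading wires. *)
Definition shift_gate (o : nat) (g : gate) : gate :=
  match g with
  | GNot a => GNot (o + a)
  | GAnd a b => GAnd (o + a) (o + b)
  | GOr a b => GOr (o + a) (o + b)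
  end.

Lemma foldl_shift_gate vs0 v gs :
  foldl wire_step (vs0 ++ v) (map (shift_gate (size vs0)) gs)
  = vs0 ++ foldl wire_step v gs.
Proof.
elim: gs v => [|g gs IH] v //=; rewrite /wire_step.
have shift_wire a : nth false (vs0 ++ v) (size vs0 + a) = nth false v a.
  by rewrite nth_cat ltnNge leq_addr /= addKn.
have -> : gate_eval (vs0 ++ v) (shift_gate (size vs0) g) = gate_eval v g.
  by case: g => [a|a b|a b] /=; rewrite !shift_wire.
by rewrite rcons_cat IH.
Qed.

(* Gate number [k] of a block that, on wires [x ++ wit] with |x| = i and
   |wit| = w, rebuilds the wire list [x ++ s ++ wit]: it copies an input bit,
   or produces the constant bit of [s] from the wire [X], which is not yet
   defined and hence reads as false. *)
Definition copy_gate (i w : nat) (s : seq bool) (k : nat) : gate :=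
  let X := i + w + (i + size s + w) in
  if k < i then GAnd k k
  else if k < i + size s then (if nth false s (k - i) then GNot X else GAnd X X)
  else GAnd (i + (k - (i + size s))) (i + (k - (i + size s))).

Lemma copy_gate_eval (x wit s u : seq bool) k :
  size u = k -> k < size x + size s + size wit ->
  gate_eval ((x ++ wit) ++ u) (copy_gate (size x) (size wit) s k)
  = nth false (x ++ s ++ wit) k.
Proof.
move=> Hu Hk; rewrite /copy_gate.
case: ltnP => H1.
  by rewrite /= andbb nth_cat size_cat (ltn_addr _ H1) nth_cat H1 nth_cat H1.
case: ltnP => H2.
  have undefined X : size x + size wit + (size x + size s + size wit) <= X ->
      nth false ((x ++ wit) ++ u) X = false.
    move=> HX; apply: nth_default; rewrite !size_cat Hu.
    by apply: leq_trans HX; rewrite leq_add2l ltnW.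
  have -> : nth false (x ++ s ++ wit) k = nth false s (k - size x).
    rewrite nth_cat ltnNge H1 /= nth_cat.
    by rewrite -(ltn_add2l (size x)) subnKC // H2.
  by case: (nth false s (k - size x)) => /=; rewrite undefined.
rewrite /= andbb.
have Hw : k - (size x + size s) < size wit by rewrite ltn_subLR // addnA.
have -> : nth false (x ++ s ++ wit) k = nth false wit (k - (size x + size s)).
  rewrite nth_cat ltnNge H1 /= nth_cat.
  by rewrite -(ltn_add2l (size x)) subnKC // ltnNge H2 /= subnDA.
by rewrite nth_cat size_cat ltn_add2l Hw nth_cat ltnNge leq_addr /= addKn.
Qed.

Lemma foldl_copy_gates (x wit s : seq bool) k :
  k <= size x + size s + size wit ->
  foldl wire_step (x ++ wit) (map (copy_gate (size x) (size wit) s) (iota 0 k))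
  = (x ++ wit) ++ take k (x ++ s ++ wit).
Proof.
elim: k => [|k IH] Hk; first by rewrite take0 cats0.
have Hk' : k < size (x ++ s ++ wit) by rewrite !size_cat addnA.
rewrite -addn1 iotaD add0n map_cat foldl_cat IH ?(ltnW Hk) //= /wire_step.
rewrite copy_gate_eval ?size_take ?Hk' //.
by rewrite addn1 (take_nth false Hk') rcons_cat.
Qed.

Definition hardwire_gates (C : circuit) (i w : nat) (s : seq bool) : seq gate :=
  map (copy_gate i w s) (iota 0 (i + size s + w))
  ++ map (shift_gate (i + w)) (gates C).

Lemma foldl_hardwire_gates C (x wit s : seq bool) :
  foldl wire_step (x ++ wit) (hardwire_gates C (size x) (size wit) s)
  = (x ++ wit) ++ wires C (x ++ s ++ wit).
Proof.
rewrite /hardwire_gates foldl_cat foldl_copy_gates //.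
by rewrite take_oversize ?size_cat ?addnA // -(size_cat x wit) foldl_shift_gate.
Qed.

Definition hardwire_pos (C : circuit) (i w : nat) (s : seq bool) : circuit :=
  Circuit (hardwire_gates C i w s) (map (addn (i + w)) (outs C)).

Definition hardwire_neg (C : circuit) (i w : nat) (s : seq bool) : circuit :=
  let V := i + w + (i + size s + w) + size (gates C) in
  Circuit (rcons (hardwire_gates C i w s)
                 (GNot (nth V (map (addn (i + w)) (outs C)) 0))) [:: V].

Lemma ceval1_hardwire_pos C (x wit s : seq bool) :
  ceval1 (hardwire_pos C (size x) (size wit) s) (x ++ wit)
  = ceval1 C (x ++ s ++ wit).
Proof.
rewrite /ceval1 /ceval /= wiresE /= foldl_hardwire_gates -map_comp.
case: (outs C) => [|a l] //=.
by rewrite nth_cat size_cat ltnNge leq_addr /= addKn.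
Qed.

Lemma ceval1_hardwire_neg C (x wit s : seq bool) :
  ceval1 (hardwire_neg C (size x) (size wit) s) (x ++ wit)
  = ~~ ceval1 C (x ++ s ++ wit).
Proof.
rewrite /ceval1 /ceval /= wiresE /= foldl_rcons foldl_hardwire_gates /wire_step /=.
set W := (x ++ wit) ++ _.
have HW : size W = size x + size wit + (size x + size s + size wit) + size (gates C).
  by rewrite /W size_cat wiresE size_foldl_wire_step !size_cat !addnA.
rewrite nth_rcons HW ltnn eqxx.
case: (outs C) => [|a l] /=; first by rewrite nth_default // HW.
by rewrite /W nth_cat size_cat ltnNge leq_addr /= addKn.
Qed.

(* [hardwire D i s neg] has the string [s] fixed after the first [i] input bits
   of [D]; with [neg] it outputs the negated bit, so that read co-
   nondeterministically it decides the complement of [D]. *)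
Definition hardwire (D : ndcircuit) (i : nat) (s : seq bool) (neg : bool)
  : ndcircuit :=
  NDCircuit (if neg then hardwire_neg (ncirc D) i (nwit D) s
             else hardwire_pos (ncirc D) i (nwit D) s) (nwit D).

Lemma class_eval_hardwire D (x s : seq bool) (neg : bool) :
  class_eval (if neg then coNPpoly else NPpoly) (hardwire D (size x) s neg) x
  = (if neg then ~~ nd_eval D (x ++ s) else nd_eval D (x ++ s)).
Proof.
case: neg => /=.
  rewrite /cond_eval negb_exists; apply: eq_forallb => w /=.
  by have := ceval1_hardwire_neg (ncirc D) x w s; rewrite size_tuple catA => ->.
apply: eq_existsb => w /=.
by have := ceval1_hardwire_pos (ncirc D) x w s; rewrite size_tuple catA => ->.
Qed.

(* Hard-wiring costs one gate per wire of [x ++ s ++ wit], plus one. *)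
Lemma ndsize_hardwire D i s neg :
  (ndsize (hardwire D i s neg) <= i + size s + 2 * ndsize D + 2)%N.
Proof.
rewrite /ndsize /csize /hardwire; case: neg => /=;
rewrite /hardwire_gates ?size_rcons size_cat !size_map size_iota /=; lia.
Qed.

Definition poly_bounded (f : nat -> nat) : Prop :=
  exists a : seq nat, forall n, f n <= polyN a n.

Definition binom_poly (C K : nat) : seq nat :=
  [seq C * 'C(K, k) | k <- iota 0 K.+1].

Lemma polyN_binom_poly C K n : polyN (binom_poly C K) n = C * n.+1 ^ K.
Proof.
rewrite /polyN size_map size_iota -[n.+1]add1n expnDn big_distrr /=.
apply: eq_bigr => k _.
by rewrite (nth_map 0) ?size_iota // nth_iota // add0n exp1n mul1n mulnA.
Qed.

Lemma nonzero_binom_poly C K : 0 < C -> nonzero_poly (binom_poly C K).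
Proof. by move=> HC; rewrite /nonzero_poly /= bin0 muln1 -lt0n HC. Qed.

(* Each coefficient contributes at most [c * (n + 1) ^ size a]. *)
Lemma polyN_le_pow a n :
  polyN a n <= (\sum_(k < size a) nth 0 a k) * n.+1 ^ size a.
Proof.
rewrite /polyN big_distrl /=; apply: leq_sum => k _.
rewrite leq_mul2l; apply/orP; right.
have base_le : n ^ k <= n.+1 ^ k by case: (nat_of_ord k) => [|k']; rewrite // leq_exp2r.
exact: leq_trans base_le (leq_pexp2l (ltn0Sn n) (ltnW (ltn_ord k))).
Qed.

Lemma poly_boundedP f :
  poly_bounded f <-> exists C K, forall n, f n <= C * n.+1 ^ K.
Proof.
split=> [[a Ha]|[C [K HCK]]].
  by exists (\sum_(k < size a) nth 0 a k), (size a) => n;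
     apply: leq_trans (Ha n) (polyN_le_pow a n).
by exists (binom_poly C K) => n; rewrite polyN_binom_poly.
Qed.

Lemma poly_bounded_const c : poly_bounded (fun _ => c).
Proof. by apply/poly_boundedP; exists c, 0%N => n; rewrite muln1. Qed.

Lemma poly_bounded_add f h :
  poly_bounded f -> poly_bounded h -> poly_bounded (fun n => f n + h n).
Proof.
move=> /poly_boundedP [C1 [K1 H1]] /poly_boundedP [C2 [K2 H2]].
apply/poly_boundedP; exists (C1 + C2), (K1 + K2) => n.
rewrite mulnDl; apply: leq_add.
  by apply: leq_trans (H1 n) _; rewrite leq_mul2l leq_pexp2l ?leq_addr ?orbT.
by apply: leq_trans (H2 n) _; rewrite leq_mul2l leq_pexp2l ?leq_addl ?orbT.
Qed.

Lemma poly_bounded_mul f h :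
  poly_bounded f -> poly_bounded h -> poly_bounded (fun n => f n * h n).
Proof.
move=> /poly_boundedP [C1 [K1 H1]] /poly_boundedP [C2 [K2 H2]].
apply/poly_boundedP; exists (C1 * C2), (K1 + K2) => n.
rewrite expnD mulnACA; exact: leq_mul.
Qed.

Lemma poly_bounded_le f h :
  (forall n, f n <= h n) -> poly_bounded h -> poly_bounded f.
Proof. by move=> Hfh [a Ha]; exists a => n; apply: leq_trans (Ha n). Qed.

Lemma poly_bounded_nonzero f :
  poly_bounded f -> exists a, nonzero_poly a /\ forall n, f n <= polyN a n.
Proof.
move=> /poly_boundedP [C [K HCK]].
exists (binom_poly C.+1 K); split; first exact: nonzero_binom_poly.
by move=> n; rewrite polyN_binom_poly; apply: leq_trans (HCK n) _; rewrite leq_mul2r leqnSn orbT.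
Qed.

Lemma polyN_gt0 a n : nonzero_poly a -> 0 < n -> 0 < polyN a n.
Proof.
move=> /hasP [c Hc Hc0] Hn.
have Hk : index c a < size a by rewrite index_mem.
rewrite /polyN (bigD1 (Ordinal Hk)) //= nth_index //.
by apply: leq_trans (leq_addr _ _); rewrite muln_gt0 lt0n Hc0 expn_gt0 Hn.
Qed.

Lemma poly_computable_stretch (m : nat -> nat) (g : generator m) :
  poly_computable g -> poly_bounded m.
Proof.
move=> [C [[a HC] HCg]]; exists a => n.
have <- : size (ceval (C n) (nseq n false)) = m n.
  by rewrite (HCg n [tuple of nseq n false]) size_tuple.
by rewrite size_map; apply: leq_trans (HC n); rewrite leq_addl.
Qed.

Lemma frequently_label (P : nat -> Prop) (b : nat -> bool) :
  (forall N, exists n, N <= n /\ P n) ->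
  exists c, forall N, exists n, N <= n /\ P n /\ b n = c.
Proof.
move=> often; apply: NNPP => none.
have eventually_not c : exists N, forall n, N <= n -> P n -> b n <> c.
  apply: NNPP => Hc; apply: none; exists c => N; apply: NNPP => HN; apply: Hc.
  by exists N => n Nn Pn bn; apply: HN; exists n.
have [[Nt Ht] [Nf Hf]] := (eventually_not true, eventually_not false).
have [n [Nn Pn]] := often (maxn Nt Nf).
have [Ntn Nfn] : Nt <= n /\ Nf <= n by split; apply: leq_trans Nn; rewrite ?leq_maxl ?leq_maxr.
by case E: (b n); [apply: (Ht n) | apply: (Hf n)].
Qed.

Local Open Scope ring_scope.

Lemma card_bool_tuple M : #|{: M.-tuple bool}| = (2 ^ M)%N.
Proof. by rewrite card_tuple card_bool. Qed.

Lemma sum_indicator (I : finType) (P : pred I) :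
  \sum_i ((P i : nat)%:R : rat) = (#|P|)%:R.
Proof.
rewrite -sum1_card natr_sum [RHS]big_mkcond /=; apply: eq_bigr => i _.
by rewrite unfold_in; case: (P i).
Qed.

Lemma exists_ge_average (I : finType) (i0 : I) (F : I -> rat) c :
  (#|I|)%:R * c <= \sum_i F i -> exists i, c <= F i.
Proof.
move=> Hsum; apply/existsP; apply: contraLR Hsum; rewrite negb_exists -ltNge.
move=> /forallP Hlt.
have -> : (#|I|)%:R * c = \sum_(i : I) c by rewrite sumr_const mulr_natl.
apply: ltr_sum; first by apply/hasP; exists i0; rewrite ?mem_index_enum.
by move=> i _; rewrite ltNge Hlt.
Qed.

Definition flip_bit M (j : nat) (r : M.-tuple bool) : M.-tuple bool :=
  [tuple (if (i : nat) == j then ~~ tnth r i else tnth r i) | i < M].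

Lemma nth_flip_bit M j (r : M.-tuple bool) k : (k < M)%N ->
  nth false (flip_bit j r) k = if k == j then ~~ nth false r k else nth false r k.
Proof.
move=> Hk.
by rewrite -(tnth_nth false _ (Ordinal Hk)) tnth_mktuple (tnth_nth false).
Qed.

Lemma flip_bitK M j : involutive (@flip_bit M j).
Proof.
move=> r; apply: eq_from_tnth => i; rewrite !tnth_mktuple.
by case: eqP => _; rewrite ?negbK.
Qed.

Lemma drop_flip_bit M j (r : M.-tuple bool) :
  drop j.+1 (flip_bit j r) = drop j.+1 r.
Proof.
apply: (@eq_from_nth _ false); first by rewrite !size_drop !size_tuple.
move=> k; rewrite size_drop size_tuple => Hk.
rewrite !nth_drop nth_flip_bit; last by rewrite -ltn_subRL.
by rewrite -[_ == _]/(j.+1 + k == j)%N eqn_leq (leqNgt _ j) ltn_addr ?andbF.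
Qed.

(* The hybrid argument (Yao): a test [f] telling the uniform distribution on
   M bits from [y(U_n)] yields a next-bit predictor.  The j-th hybrid takes the
   first [j] bits from [y x] and the rest from a uniform [r]. *)
Section NextBitPredictor.

Variables (n M : nat) (y : n.-tuple bool -> M.-tuple bool).
Variable f : seq bool -> bool.

Let a : rat := (2 ^ n)%:R.
Let b : rat := (2 ^ M)%:R.

Fact a_gt0 : 0 < a. Proof. by rewrite ltr0n expn_gt0. Qed.
Fact b_gt0 : 0 < b. Proof. by rewrite ltr0n expn_gt0. Qed.

Definition hybrid_count (j : nat) : rat :=
  \sum_(x : n.-tuple bool) \sum_(r : M.-tuple bool)
    ((f (take j (y x) ++ drop j r) : nat)%:R).

(* Predictor with advice [r]: read [f] on the next hybrid where bit [j] is
   [r_j]; output [r_j] if [f] accepts, its negation otherwise. *)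
Definition predict (j : nat) (r u : seq bool) : bool :=
  let v := f (take j u ++ drop j r) in if nth false r j then ~~ v else v.

(* The extreme hybrids are [f]'s acceptance of U_M and of y(U_n). *)
Lemma hybrid_count_extremes eps :
  eps <= prob [pred r : M.-tuple bool | f r] - prob [pred x | f (y x)] ->
  a * b * eps <= hybrid_count 0 - hybrid_count M.
Proof.
move=> Heps.
set cf : rat := (#|[pred r : M.-tuple bool | f r]|)%:R.
set cy : rat := (#|[pred x : n.-tuple bool | f (y x)]|)%:R.
have -> : hybrid_count 0 = a * cf.
  rewrite /hybrid_count (eq_bigr (fun _ => cf)) => [|x _]; last first.
    by rewrite /cf -sum_indicator; apply: eq_bigr => r _; rewrite take0 drop0.
  by rewrite sumr_const card_bool_tuple -mulr_natl.
have -> : hybrid_count M = b * cy.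
  rewrite /hybrid_count (eq_bigr (fun x => b * ((f (y x) : nat)%:R))) => [|x _].
    by rewrite -mulr_sumr /cy -sum_indicator.
  rewrite take_oversize ?size_tuple // (eq_bigr (fun _ => ((f (y x) : nat)%:R : rat))).
    by rewrite sumr_const card_bool_tuple /b mulr_natl.
  by move=> r _; rewrite drop_oversize ?size_tuple // cats0.
have -> : a * cf - b * cy = a * b * (cf / b - cy / a).
  by field; rewrite ?gt_eqF ?a_gt0 ?b_gt0.
by rewrite ler_wpM2l // mulr_ge0 // ltW ?a_gt0 ?b_gt0.
Qed.

(* Telescoping: some consecutive pair of hybrids is [1/M] as far apart. *)
Lemma hybrid_step : (0 < M)%N ->
  exists j : 'I_M, (hybrid_count 0 - hybrid_count M) / M%:R
                   <= hybrid_count j - hybrid_count j.+1.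
Proof.
move=> HM; apply: (exists_ge_average (Ordinal HM)).
rewrite card_ord mulrC mulfVK ?pnatr_eq0 -?lt0n //.
rewrite -(big_mkord xpredT (fun j => hybrid_count j - hybrid_count j.+1)).
rewrite (eq_bigr (fun j => - (hybrid_count j.+1 - hybrid_count j))) => [|j _].
  by rewrite sumrN telescope_sumr // opprB.
by rewrite opprB.
Qed.

(* The flip [r <-> flip_bit j r] matches the two values of bit [j]; for each
   fixed [u], the predictor's successes are counted by the difference of the
   j-th and (j+1)-th hybrids. *)
Lemma predict_successes j u : (j < M)%N -> size u = M ->
  2 * \sum_(r : M.-tuple bool) (((predict j r u == nth false u j) : nat)%:R : rat)
  = b + 2 * (\sum_(r : M.-tuple bool) ((f (take j u ++ drop j r) : nat)%:R)
           - \sum_(r : M.-tuple bool) ((f (take j.+1 u ++ drop j.+1 r) : nat)%:R)).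
Proof.
move=> Hj Hu.
pose X (r : M.-tuple bool) := (((predict j r u == nth false u j) : nat)%:R : rat).
pose H0 (r : M.-tuple bool) := ((f (take j u ++ drop j r) : nat)%:R : rat).
pose H1 (r : M.-tuple bool) := ((f (take j.+1 u ++ drop j.+1 r) : nat)%:R : rat).
have flip_inj : injective (@flip_bit M j) by apply: inv_inj; exact: flip_bitK.
have sum_flip (F : M.-tuple bool -> rat) : \sum_r F r = \sum_r F (flip_bit j r).
  exact: reindex_inj flip_inj.
have pair_identity r : X r + X (flip_bit j r) + 2 * H1 r = 1 + H0 r + H0 (flip_bit j r).
  have Hjr : (j < size r)%N by rewrite size_tuple.
  rewrite /X /H0 /H1 /predict (drop_nth false Hjr).
  rewrite (drop_nth false (_ : j < size (flip_bit j r))%N) ?size_tuple //.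
  rewrite drop_flip_bit nth_flip_bit // eqxx.
  rewrite (take_nth false (_ : j < size u)%N) ?Hu // cat_rcons.
  case: (nth false r j); case: (nth false u j);
  case: (f (take j u ++ false :: drop j.+1 r)); case: (f (take j u ++ true :: drop j.+1 r));
  rewrite /=; lra.
have summed : \sum_r (X r + X (flip_bit j r) + 2 * H1 r)
               = \sum_r (1 + H0 r + H0 (flip_bit j r)).
  by apply: eq_bigr => r _; exact: pair_identity.
rewrite !big_split /= -!sum_flip sumr_const card_bool_tuple -mulr_sumr in summed.
change (2 * \sum_r X r = b + 2 * (\sum_r H0 r - \sum_r H1 r)); lra.
Qed.

(* Averaging over the advice [r]: some [r] makes the predictor correct with
   advantage the hybrid difference, normalised by the number of pairs. *)
Lemma predict_advantage j : (j < M)%N ->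
  exists r : M.-tuple bool,
    1 / 2 + (hybrid_count j - hybrid_count j.+1) / (a * b)
    <= prob [pred x | predict j r (y x) == nth false (y x) j].
Proof.
move=> Hj; set delta := hybrid_count j - hybrid_count j.+1.
pose succ (r : M.-tuple bool) := \sum_(x : n.-tuple bool)
  (((predict j r (y x) == nth false (y x) j) : nat)%:R : rat).
have total : 2 * \sum_r succ r = a * b + 2 * delta.
  rewrite /succ exchange_big /= mulr_sumr.
  rewrite (eq_bigr _ (fun x _ => predict_successes Hj (size_tuple (y x)))).
  rewrite big_split /= sumr_const card_bool_tuple -mulr_sumr sumrB.
  by rewrite -[b *+ _]mulr_natl -/a /delta /hybrid_count.
have [r Hr] : exists r, a / 2 + delta / b <= succ r.
  apply: (exists_ge_average [tuple of nseq M false]); rewrite card_bool_tuple -/b.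
  have -> : b * (a / 2 + delta / b) = (a * b + 2 * delta) / 2.
    by field; rewrite gt_eqF ?b_gt0.
  lra.
exists r; rewrite /prob -/a ler_pdivlMr ?a_gt0 // -sum_indicator.
apply: le_trans Hr; rewrite le_eqVlt; apply/orP; left; apply/eqP.
by field; rewrite !gt_eqF ?a_gt0 ?b_gt0.
Qed.

Lemma next_bit_predictor eps : (0 < M)%N ->
  eps <= prob [pred r : M.-tuple bool | f r] - prob [pred x | f (y x)] ->
  exists j, (j < M)%N /\ exists r : M.-tuple bool,
    1 / 2 + eps / M%:R <= prob [pred x | predict j r (y x) == nth false (y x) j].
Proof.
move=> HM Heps; have [j Hj] := hybrid_step HM.
have [r Hr] := predict_advantage (ltn_ord j).
exists j; split; first exact: ltn_ord.
exists r; apply: le_trans Hr; rewrite lerD2l.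
have ab_gt0 : 0 < a * b by rewrite mulr_gt0 ?a_gt0 ?b_gt0.
have M_gt0 : 0 < M%:R :> rat by rewrite ltr0n.
rewrite ler_pdivlMr // mulrAC ler_pdivrMr // mulrC.
apply: le_trans (hybrid_count_extremes Heps) _.
by rewrite -ler_pdivrMr.
Qed.

End NextBitPredictor.

Lemma inv_le_inv_mul (P M Q : nat) : (0 < P)%N -> (0 < M)%N -> (P * M <= Q)%N ->
  1 / Q%:R <= 1 / P%:R / M%:R :> rat.
Proof.
move=> HP HM HQ.
have PM_gt0 : (0 < P * M)%N by rewrite muln_gt0 HP HM.
rewrite !div1r -invfM -natrM lef_pV2 ?posrE ?ltr0n ?ler_nat //.
exact: leq_trans HQ.
Qed.

Section PredictorFromDistinguisher.

Variables (m : nat -> nat) (g : generator m).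
Arguments g : clear implicits.
Hypothesis m_gt : forall n, (n < m n)%N.
Hypothesis m_poly : poly_bounded m.
Variables (D : nat -> ndcircuit) (p : seq nat).
Hypothesis D_poly : poly_size_nd D.
Hypothesis p_nonzero : nonzero_poly p.

Definition advantage (n : nat) : rat :=
  prob [pred y : (m n).-tuple bool | nd_eval (D n) y]
  - prob [pred x : n.-tuple bool | nd_eval (D n) (g n x)].

Definition far (n : nat) : Prop := 1 / (polyN p n)%:R <= advantage n.

Lemma far_infinitely_often :
  ~ (exists N, forall n, (N <= n)%N -> advantage n < 1 / (polyN p n)%:R) ->
  forall N, exists n, (N <= n)%N /\ far n.
Proof.
move=> not_close N; apply: NNPP => never_far; apply: not_close.
exists N => n Nn; rewrite ltNge; apply/negP => Hfar.
by apply: never_far; exists n.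
Qed.

Definition good_advice (n : nat) (q : nat * seq bool) : Prop :=
  [/\ (q.1 < m n)%N, size q.2 = m n &
      far n -> 1 / 2 + 1 / (polyN p n)%:R / (m n)%:R
               <= prob [pred x | predict (nd_eval (D n)) q.1 q.2 (g n x)
                                 == nth false (g n x) q.1]].

Lemma exists_good_advice : exists adv, forall n, good_advice n (adv n).
Proof.
apply: choice => n.
have m_pos : (0 < m n)%N by apply: leq_ltn_trans (m_gt n).
have [Hfar | Hnear] := classic (far n); last first.
  by exists (0%N, nseq (m n) false); split; rewrite ?size_nseq // => /Hnear.
have [j [Hj [r Hr]]] := @next_bit_predictor n (m n) (g n) (nd_eval (D n)) _ m_pos Hfar.
by exists (j, val r); split; rewrite ?size_tuple.
Qed.

Variable adv : nat -> nat * seq bool.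
Hypothesis adv_good : forall n, good_advice n (adv n).

Local Notation j n := (adv n).1.
Local Notation r n := (adv n).2.

Definition predictor (c : bool) (n : nat) : ndcircuit :=
  hardwire (D n) (j n) (drop (j n) (r n)) c.

Lemma predictor_poly_size c : poly_size_nd (predictor c).
Proof.
have bound n : (ndsize (predictor c n) <= m n + 2 * ndsize (D n) + 2)%N.
  have [Hj Hr _] := adv_good n.
  apply: leq_trans (ndsize_hardwire _ _ _ _) _.
  have size_r : size (r n) = m n := Hr.
  by rewrite size_drop size_r subnKC // ltnW.
apply: poly_bounded_le bound _.
apply: poly_bounded_add (poly_bounded_const 2).
exact: poly_bounded_add m_poly (poly_bounded_mul (poly_bounded_const 2) D_poly).
Qed.

Lemma predictor_eval n c (x : n.-tuple bool) : nth false (r n) (j n) = c ->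
  class_eval (if c then coNPpoly else NPpoly) (predictor c n) (take (j n) (g n x))
  = predict (nd_eval (D n)) (j n) (r n) (g n x).
Proof.
have [Hj _ _] := adv_good n; move=> Hc.
have size_prefix : size (take (j n) (g n x)) = j n.
  by rewrite size_take size_tuple Hj.
by rewrite /predictor -{1}size_prefix class_eval_hardwire /predict Hc.
Qed.

Lemma predictable_of_far (c : bool) :
  (forall N, exists n, (N <= n)%N /\ far n /\ nth false (r n) (j n) = c) ->
  predictable (if c then coNPpoly else NPpoly) g.
Proof.
move=> often; exists (predictor c); split; first exact: predictor_poly_size.
have pm_poly : poly_bounded (fun n => polyN p n * m n)%N.
  by apply: poly_bounded_mul m_poly; exists p.
have [q [q_nz Hq]] := poly_bounded_nonzero pm_poly.
exists q; split => // N; have [n [Nn [Hfar Hc]]] := often N.+1.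
have [Hj _ Hpred] := adv_good n.
exists n; split; first exact: ltnW.
exists (j n); split => //.
have -> : prob [pred x | class_eval (if c then coNPpoly else NPpoly) (predictor c n)
                           (take (j n) (g n x)) == nth false (g n x) (j n)]
  = prob [pred x | predict (nd_eval (D n)) (j n) (r n) (g n x) == nth false (g n x) (j n)].
  by rewrite /prob; congr (_%:R / _); apply: eq_card => x; rewrite !inE predictor_eval.
apply: le_trans (Hpred Hfar); rewrite lerD2l.
apply: inv_le_inv_mul (Hq n); first exact: polyN_gt0 p_nonzero (leq_trans (ltn0Sn N) Nn).
exact: leq_ltn_trans (m_gt n).
Qed.

End PredictorFromDistinguisher.

Theorem proposition5p3 (m : nat -> nat) (g : generator m) :
  poly_computable g ->
  (forall n, (n < m n)%N) ->
  unpredictable NPpoly g ->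
  unpredictable coNPpoly g ->
  super_bits g.
Proof.
move=> g_poly m_gt np_unpred conp_unpred D D_poly p p_nonzero.
have m_poly := poly_computable_stretch g_poly.
apply: NNPP => not_close.
have often_far := @far_infinitely_often m g D p not_close.
have [adv adv_good] := exists_good_advice g m_gt D p.
have [c often_c] :=
  frequently_label (fun n => nth false (adv n).2 (adv n).1) often_far.
have := predictable_of_far m_gt m_poly D_poly p_nonzero adv_good often_c.
by case: c {often_c} => [/conp_unpred | /np_unpred].
Qed.
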